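(* Let $W$ be a representation $\sigma\mapsto A_\sigma$ of a semigroup $\Sigma$ and let $\Gamma:W\times\mathbb{R}^p\to W$ be smooth with $\Gamma(A_\sigma X;\lambda)=A_\sigma\Gamma(X;\lambda)$ for all $\sigma\in\Sigma$, $X$, $\lambda$. Let $X_0\in W$, $\lambda_0\in\mathbb{R}^p$ with $\Gamma(X_0;\lambda_0)=0$ and $A_\sigma X_0=X_0$ for all $\sigma\in\Sigma$. Let $L_0=D_X\Gamma(X_0;\lambda_0)$ with semisimple part $L_0^S$. Then $\ker L_0^S$ and $\mathrm{im}\,L_0^S$ are subrepresentations, and the reduced map $r:\ker L_0^S\times\Lambda\to\ker L_0^S$ (constructed as in the context) is $\Sigma$-equivariant: $r(A_\sigma X_{\ker};\lambda)=A_\sigma r(X_{\ker};\lambda)$ for all $\sigma\in\Sigma$ and all $(X_{\ker},\lambda)$ sufficiently close to $((X_0)_{\ker},\lambda_0)$, where $A_\sigma$ denotes the restriction to $\ker L_0^S$.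
   Context: A representation of a semigroup $\Sigma$ in a finite-dimensional real vector space $W$ is a map $\sigma\mapsto A_\sigma\in\mathfrak{gl}(W)$ with $A_\sigma A_\tau=A_{\sigma\tau}$; a subrepresentation is a subspace invariant under all $A_\sigma$. For a linear $L_0$, $L_0=L_0^S+L_0^N$ is its decomposition into commuting semisimple and nilpotent parts; $W=\mathrm{im}\,L_0^S\oplus\ker L_0^S$ with projections $P_{\mathrm{im}},P_{\ker}$, and write $X=X_{\mathrm{im}}+X_{\ker}$. Set $\Gamma_{\mathrm{im}}=P_{\mathrm{im}}\circ\Gamma$, $\Gamma_{\ker}=P_{\ker}\circ\Gamma$. Since $D_{X_{\mathrm{im}}}\Gamma_{\mathrm{im}}(X_0;\lambda_0)$ is invertible on $\mathrm{im}\,L_0^S$, the implicit function theorem gives a smooth $X_{\mathrm{im}}(X_{\ker},\lambda)$, defined for $X_{\ker}$ near $(X_0)_{\ker}$ and $\lambda$ in a neighbourhood $\Lambda$ of $\lambda_0$, which is the unique solution near $(X_0)_{\mathrm{im}}$ of $\Gamma_{\mathrm{im}}(X_{\mathrm{im}}+X_{\ker};\lambda)=0$. The reduced map is $r(X_{\ker};\lambda)=\Gamma_{\ker}(X_{\mathrm{im}}(X_{\ker},\lambda)+X_{\ker};\lambda)$. *)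

From Stdlib Require Import Reals Lra Lia Arith.
Open Scope R_scope.

(* Vectors of R^n are modelled as functions nat -> R supported on {0,..,n-1};
   linear maps of R^n as matrices nat -> nat -> R acting through [mat_vec]
   (only entries with indices < n matter). *)

Definition vec (n : nat) (x : nat -> R) : Prop :=
  forall i, (n <= i)%nat -> x i = 0.

Definition vzero : nat -> R := fun _ => 0.
Definition vadd (x y : nat -> R) : nat -> R := fun i => x i + y i.
Definition vsub (x y : nat -> R) : nat -> R := fun i => x i - y i.
Definition vscale (a : R) (x : nat -> R) : nat -> R := fun i => a * x i.

Fixpoint rsum (k : nat) (f : nat -> R) : R :=
  match k with O => 0 | S k => rsum k f + f k end.

Fixpoint vnorm (n : nat) (x : nat -> R) : R :=
  match n with O => 0 | S m => Rmax (vnorm m x) (Rabs (x m)) end.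

Definition mat_vec (n : nat) (M : nat -> nat -> R) (x : nat -> R) : nat -> R :=
  fun i => if Nat.ltb i n then rsum n (fun k => M i k * x k) else 0.

Definition upd (x : nat -> R) (j : nat) (t : R) : nat -> R :=
  fun i => if Nat.eqb i j then t else x i.

(* splitting R^(n+p) into R^n x R^p *)
Definition vtake (n : nat) (z : nat -> R) : nat -> R :=
  fun i => if Nat.ltb i n then z i else 0.
Definition vdrop (n : nat) (z : nat -> R) : nat -> R := fun i => z (n + i)%nat.

Definition cont_on (m : nat) (f : (nat -> R) -> R) : Prop :=
  forall x, vec m x -> forall eps, 0 < eps -> exists delta, 0 < delta /\
    forall y, vec m y -> vnorm m (vsub y x) < delta -> Rabs (f y - f x) < eps.

Fixpoint Ck (m k : nat) (f : (nat -> R) -> R) : Prop :=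
  match k with
  | O => cont_on m f
  | S k' => cont_on m f /\
      forall j, (j < m)%nat -> exists g : (nat -> R) -> R,
        (forall x, vec m x -> derivable_pt_lim (fun t => f (upd x j t)) (x j) (g x))
        /\ Ck m k' g
  end.

Definition smooth (m : nat) (f : (nat -> R) -> R) : Prop := forall k, Ck m k f.

Definition subspace (n : nat) (U : (nat -> R) -> Prop) : Prop :=
  (forall x, U x -> vec n x) /\ U vzero /\
  (forall x y, U x -> U y -> U (vadd x y)) /\
  (forall a x, U x -> U (vscale a x)).

Definition invariant (n : nat) (M : nat -> nat -> R) (U : (nat -> R) -> Prop) : Prop :=
  forall x, U x -> U (mat_vec n M x).

Definition semisimple (n : nat) (M : nat -> nat -> R) : Prop :=
  forall U, subspace n U -> invariant n M U ->
    exists V, subspace n V /\ invariant n M V /\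
      (forall x, U x -> V x -> x = vzero) /\
      (forall x, vec n x -> exists u v, U u /\ V v /\ x = vadd u v).

Definition nilpotent (n : nat) (M : nat -> nat -> R) : Prop :=
  exists k, forall x, vec n x -> Nat.iter k (mat_vec n M) x = vzero.

Definition commute (n : nat) (M M' : nat -> nat -> R) : Prop :=
  forall x, vec n x -> mat_vec n M (mat_vec n M' x) = mat_vec n M' (mat_vec n M x).

Definition ker_op (n : nat) (M : nat -> nat -> R) (x : nat -> R) : Prop :=
  vec n x /\ mat_vec n M x = vzero.

Definition im_op (n : nat) (M : nat -> nat -> R) (y : nat -> R) : Prop :=
  exists x, vec n x /\ y = mat_vec n M x.

(* Xim is the implicit-function-theorem solution X_im(X_ker, lambda):
   defined on {X_ker in ker L0^S, |X_ker - (X0)_ker| < d1} x {|lambda - lambda0| < d1},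
   continuous there, and the unique solution of Gamma_im(X_im + X_ker; lambda) = 0
   in im L0^S within distance d2 of (X0)_im. *)
Definition implicit_solution (n p : nat)
    (Gamma : (nat -> R) -> (nat -> R) -> (nat -> R))
    (LS : nat -> nat -> R) (Pim Pker : (nat -> R) -> (nat -> R))
    (X0 lam0 : nat -> R) (Xim : (nat -> R) -> (nat -> R) -> (nat -> R))
    (d1 d2 : R) : Prop :=
  0 < d1 /\ 0 < d2 /\
  (forall Xk l, ker_op n LS Xk -> vec p l ->
     vnorm n (vsub Xk (Pker X0)) < d1 -> vnorm p (vsub l lam0) < d1 ->
     im_op n LS (Xim Xk l) /\
     vnorm n (vsub (Xim Xk l) (Pim X0)) < d2 /\
     Pim (Gamma (vadd (Xim Xk l) Xk) l) = vzero /\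
     (forall Y, im_op n LS Y -> vnorm n (vsub Y (Pim X0)) < d2 ->
        Pim (Gamma (vadd Y Xk) l) = vzero -> Y = Xim Xk l)) /\
  (forall Xk l, ker_op n LS Xk -> vec p l ->
     vnorm n (vsub Xk (Pker X0)) < d1 -> vnorm p (vsub l lam0) < d1 ->
     forall eps, 0 < eps -> exists delta, 0 < delta /\
       forall Xk' l', ker_op n LS Xk' -> vec p l' ->
         vnorm n (vsub Xk' (Pker X0)) < d1 -> vnorm p (vsub l' lam0) < d1 ->
         vnorm n (vsub Xk' Xk) < delta -> vnorm p (vsub l' l) < delta ->
         vnorm n (vsub (Xim Xk' l') (Xim Xk l)) < eps).

Definition reduced_map (Gamma : (nat -> R) -> (nat -> R) -> (nat -> R))
    (Pker : (nat -> R) -> (nat -> R)) (Xim : (nat -> R) -> (nat -> R) -> (nat -> R))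
    (Xk l : nat -> R) : nat -> R :=
  Pker (Gamma (vadd (Xim Xk l) Xk) l).

(* Fix one operator B = A_sigma.

   For L0 = L0^S + L0^N with L0^S semisimple, L0^N
      nilpotent (L0^N)^k = 0 and [L0^S, L0^N] = 0, one has
      ker L0^S = ker L0^k and im L0^S = im L0^k; the second identity is a
      rank argument, carried out with MathComp matrices.  Hence every
      operator commuting with L0 preserves ker L0^S and im L0^S, and then
      it commutes with the projections of W = im L0^S (+) ker L0^S.
   2. Linearization.  Differentiating Gamma(B X; lam0) = B Gamma(X; lam0)
      at the fixed point X0 in the direction e_j gives B L0 = L0 B.  The
      right-hand derivative is a directional derivative of Gamma along a
      column of B, computed from the continuous partial derivatives of
      Gamma (a C^1 chain rule, proved by the mean value theorem one
      coordinate at a time).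
   3. Reduction.  By the uniqueness clause of the implicit function theorem,
      B X_im(X_ker, lam) and X_im(B X_ker, lam) solve the same equation near
      (X0)_im, so they agree; projecting to ker L0^S gives r(B X_ker; lam)
      = B r(X_ker; lam). *)

From Stdlib Require Import Reals Lra Lia.
From Stdlib Require Import FunctionalExtensionality IndefiniteDescription.
From mathcomp Require all_boot all_algebra Rstruct zify.
Open Scope R_scope.

Ltac vext := apply functional_extensionality; intro;
  unfold vadd, vsub, vscale, vzero; ring.

Lemma rsum_ext m f g : (forall k, (k < m)%nat -> f k = g k) -> rsum m f = rsum m g.
Proof.
induction m; intros H; simpl; auto.
rewrite IHm, H by (auto; intros; apply H; lia). reflexivity.
Qed.

Lemma rsum_plus m f g : rsum m (fun k => f k + g k) = rsum m f + rsum m g.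
Proof. induction m; simpl; try rewrite IHm; ring. Qed.

Lemma rsum_minus m f g : rsum m (fun k => f k - g k) = rsum m f - rsum m g.
Proof. induction m; simpl; try rewrite IHm; ring. Qed.

Lemma rsum_scal m c f : rsum m (fun k => c * f k) = c * rsum m f.
Proof. induction m; simpl; try rewrite IHm; ring. Qed.

Lemma rsum_zero m f : (forall k, (k < m)%nat -> f k = 0) -> rsum m f = 0.
Proof.
intros H; rewrite (rsum_ext m f (fun _ => 0)) by auto.
clear H; induction m; simpl; try rewrite IHm; ring.
Qed.

Lemma rsum_swap m n F :
  rsum m (fun i => rsum n (fun k => F i k)) = rsum n (fun k => rsum m (fun i => F i k)).
Proof.
induction m; simpl.
- rewrite rsum_zero; auto.
- rewrite IHm, <- rsum_plus; auto.
Qed.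

Lemma rsum_trunc m n f :
  (n <= m)%nat -> (forall k, (n <= k)%nat -> f k = 0) -> rsum m f = rsum n f.
Proof.
induction m; intros H1 H2.
- replace n with 0%nat by lia; auto.
- destruct (Nat.eq_dec n (S m)) as [->|]; auto.
  simpl; rewrite IHm, H2 by (auto; lia); ring.
Qed.

Lemma rsum_tele m (F : nat -> R) : rsum m (fun j => F (S j) - F j) = F m - F 0%nat.
Proof. induction m; simpl; try rewrite IHm; ring. Qed.

Lemma rsum_ge0 m f : (forall k, (k < m)%nat -> 0 <= f k) -> 0 <= rsum m f.
Proof.
induction m; intros H; simpl; [lra|].
assert (0 <= f m) by auto; assert (0 <= rsum m f) by auto; lra.
Qed.

Lemma rsum_term m f i :
  (i < m)%nat -> (forall k, (k < m)%nat -> 0 <= f k) -> f i <= rsum m f.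
Proof.
induction m; intros hi H; [lia|]; simpl.
destruct (Nat.eq_dec i m) as [->|].
- assert (0 <= rsum m f) by (apply rsum_ge0; auto); lra.
- assert (f i <= rsum m f) by (apply IHm; auto; lia); assert (0 <= f m) by auto; lra.
Qed.

Lemma rsum_abs_bound m f b :
  (forall k, (k < m)%nat -> Rabs (f k) <= b k) -> Rabs (rsum m f) <= rsum m b.
Proof.
induction m; intros H; simpl.
- rewrite Rabs_R0; lra.
- eapply Rle_trans; [apply Rabs_triang|]; apply Rplus_le_compat; auto.
Qed.

Lemma mv_vec n M x : vec n (mat_vec n M x).
Proof. intros i hi; unfold mat_vec; destruct (Nat.ltb_spec i n); [lia|auto]. Qed.

Lemma iter_vec n M k x : vec n x -> vec n (Nat.iter k (mat_vec n M) x).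
Proof. destruct k; simpl; auto; intros; apply mv_vec. Qed.

Lemma mv_add n M x y : mat_vec n M (vadd x y) = vadd (mat_vec n M x) (mat_vec n M y).
Proof.
apply functional_extensionality; intro i; unfold mat_vec, vadd.
destruct (Nat.ltb i n); [|ring]. rewrite <- rsum_plus; apply rsum_ext; intros; ring.
Qed.

Lemma mv_sub n M x y : mat_vec n M (vsub x y) = vsub (mat_vec n M x) (mat_vec n M y).
Proof.
apply functional_extensionality; intro i; unfold mat_vec, vsub.
destruct (Nat.ltb i n); [|ring]. rewrite <- rsum_minus; apply rsum_ext; intros; ring.
Qed.

Lemma mv_scale n M a x : mat_vec n M (vscale a x) = vscale a (mat_vec n M x).
Proof.
apply functional_extensionality; intro i; unfold mat_vec, vscale.
destruct (Nat.ltb i n); [|ring]. rewrite <- rsum_scal; apply rsum_ext; intros; ring.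
Qed.

Lemma mv_zero n M : mat_vec n M vzero = vzero.
Proof.
apply functional_extensionality; intro i; unfold mat_vec, vzero.
destruct (Nat.ltb i n); auto. apply rsum_zero; intros; ring.
Qed.

Lemma mv_ext n M N x :
  (forall i j, (i < n)%nat -> (j < n)%nat -> M i j = N i j) -> mat_vec n M x = mat_vec n N x.
Proof.
intros H; apply functional_extensionality; intro i; unfold mat_vec.
destruct (Nat.ltb_spec i n); auto. apply rsum_ext; intros; rewrite H; auto.
Qed.

Definition matmul n (M N : nat -> nat -> R) i k := rsum n (fun j => M i j * N j k).

Lemma mv_mul n M N x : mat_vec n M (mat_vec n N x) = mat_vec n (matmul n M N) x.
Proof.
apply functional_extensionality; intro i; unfold mat_vec at 1 3.
destruct (Nat.ltb i n); auto. unfold matmul.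
rewrite (rsum_ext n _ (fun j => rsum n (fun k => M i j * N j k * x k))).
- rewrite rsum_swap; apply rsum_ext; intros k _.
  rewrite (Rmult_comm _ (x k)), <- rsum_scal; apply rsum_ext; intros; ring.
- intros j hj; unfold mat_vec; destruct (Nat.ltb_spec j n); [|lia].
  rewrite <- rsum_scal; apply rsum_ext; intros; ring.
Qed.

Lemma iter_add n M k x y : Nat.iter k (mat_vec n M) (vadd x y)
  = vadd (Nat.iter k (mat_vec n M) x) (Nat.iter k (mat_vec n M) y).
Proof. induction k; simpl; auto. rewrite IHk, mv_add; auto. Qed.

Lemma iter_sub n M k x y : Nat.iter k (mat_vec n M) (vsub x y)
  = vsub (Nat.iter k (mat_vec n M) x) (Nat.iter k (mat_vec n M) y).
Proof. induction k; simpl; auto. rewrite IHk, mv_sub; auto. Qed.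

Lemma iter_zero n M k : Nat.iter k (mat_vec n M) vzero = vzero.
Proof. induction k; simpl; auto. rewrite IHk, mv_zero; auto. Qed.

Lemma iter_comm n M N k x : vec n x -> commute n M N ->
  Nat.iter k (mat_vec n M) (mat_vec n N x) = mat_vec n N (Nat.iter k (mat_vec n M) x).
Proof. intros hx hc; induction k; simpl; auto. rewrite IHk; apply hc, iter_vec; auto. Qed.

(* The rank argument: for square matrices S and P with the same kernel, an
   inclusion im P <= im S of images is an equality.  It is transported to
   the representation of R^n used in the statement. *)
Module MatrixRank.
Import all_boot all_algebra Rstruct zify.
Import GRing.Theory.
Local Open Scope ring_scope.

Lemma image_incl_of_kernel_eq (n : nat) (S P : 'M[R]_n) :
  (forall u : 'rV_n, (u *m S == 0) = (u *m P == 0)) ->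
  (forall u : 'rV_n, exists w : 'rV_n, u *m P = w *m S) ->
  forall u : 'rV_n, exists w : 'rV_n, u *m S = w *m P.
Proof.
move=> hker him.
have PS : (P <= S)%MS.
  apply/row_subP => i; have [w hw] := him (row i 1%:M).
  have -> : row i P = row i 1%:M *m P by rewrite -row_mul mul1mx.
  by rewrite hw submxMl.
have kerSP : (kermx S == kermx P)%MS.
  apply/andP; split; apply/row_subP => i; apply/sub_kermxP.
    by apply/eqP; rewrite -hker; apply/eqP/sub_kermxP/row_sub.
  by apply/eqP; rewrite hker; apply/eqP/sub_kermxP/row_sub.
have rankSP : \rank S = \rank P.
  have := mxrank_ker S; have := mxrank_ker P; rewrite (eqmx_rank kerSP).
  by have := rank_leq_col S; have := rank_leq_col P; lia.
have SP : (S <= P)%MS by rewrite -(mxrank_leqif_sup PS) rankSP.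
by move=> u; apply/submxP; apply: submx_trans (submxMl u S) SP.
Qed.

Definition rv (n : nat) (x : nat -> R) : 'rV[R]_n := \row_(j < n) x j.
Definition unrv (n : nat) (r : 'rV[R]_n) : nat -> R :=
  fun i => if insub i is Some j then r 0 j else 0.
Arguments unrv {n}.
Definition mxof (n : nat) (M : nat -> nat -> R) : 'M[R]_n := \matrix_(i < n, j < n) M j i.

Lemma rsum_big n (f : nat -> R) : rsum n f = \sum_(k < n) f k.
Proof. by elim: n => [|n IH] /=; rewrite ?big_ord0 // big_ord_recr /= IH. Qed.

Lemma unrv_vec {n} (r : 'rV[R]_n) : vec n (unrv r).
Proof. by move=> i /leP hi; rewrite /unrv insubN // -leqNgt. Qed.

Lemma unrvK {n x} : vec n x -> unrv (rv n x) = x.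
Proof.
move=> hx; apply: functional_extensionality => i; rewrite /unrv.
case: insubP => [j _ <-|]; first by rewrite mxE.
by rewrite -leqNgt => /leP h; rewrite hx.
Qed.

Lemma rvK {n} (r : 'rV[R]_n) : rv n (unrv r) = r.
Proof.
apply/rowP => j; rewrite mxE /unrv insubT //= => h.
by congr (r 0 _); apply: val_inj.
Qed.

Lemma rv_mat n M x : rv n (mat_vec n M x) = rv n x *m mxof n M.
Proof.
apply/rowP => j; rewrite !mxE /mat_vec.
have -> : Nat.ltb j n = true by apply/PeanoNat.Nat.ltb_lt/ltP.
by rewrite rsum_big; apply: eq_bigr => k _; rewrite !mxE mulrC.
Qed.

Lemma rv_iter n L k x : rv n (Nat.iter k (mat_vec n L) x) = rv n x *m (mxof n L) ^+ k.
Proof.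
elim: k => [|k IH] /=; first by rewrite expr0 mulmx1.
by rewrite rv_mat IH exprSr mulmxA.
Qed.

Lemma rv_zero n : rv n vzero = 0.
Proof. by apply/rowP => j; rewrite !mxE. Qed.

Lemma rv_inj n x y : vec n x -> vec n y -> rv n x = rv n y -> x = y.
Proof. by move=> hx hy e; rewrite -(unrvK hx) -(unrvK hy) e. Qed.

Lemma rv_eq0 n x : vec n x -> rv n x = 0 <-> x = vzero.
Proof.
move=> hx; split=> [e|->]; last exact: rv_zero.
have hz : vec n vzero by [].
by apply: (rv_inj n x vzero hx hz); rewrite e rv_zero.
Qed.

Lemma image_incl_iter n (S L : nat -> nat -> R) k :
  (forall x, vec n x -> (mat_vec n S x = vzero <-> Nat.iter k (mat_vec n L) x = vzero)) ->
  (forall x, vec n x -> exists w, vec n w /\ Nat.iter k (mat_vec n L) x = mat_vec n S w) ->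
  forall x, vec n x -> exists w, vec n w /\ mat_vec n S x = Nat.iter k (mat_vec n L) w.
Proof.
move=> hker him x hx.
have kerSP (u : 'rV_n) : (u *m mxof n S == 0) = (u *m (mxof n L ^+ k) == 0).
  rewrite -(rvK u) -rv_mat -rv_iter; have hy := unrv_vec u.
  apply/eqP/eqP => e.
    exact/(rv_eq0 _ _ (iter_vec _ _ _ _ hy))/(hker _ hy)/(rv_eq0 _ _ (mv_vec _ _ _)).
  exact/(rv_eq0 _ _ (mv_vec _ _ _))/(hker _ hy)/(rv_eq0 _ _ (iter_vec _ _ _ _ hy)).
have imPS (u : 'rV_n) : exists w : 'rV_n, u *m (mxof n L ^+ k) = w *m mxof n S.
  have [w [_ e]] := him _ (unrv_vec u); exists (rv n w).
  by rewrite -(rvK u) -rv_iter e rv_mat.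
have [w hw] := @image_incl_of_kernel_eq n _ _ kerSP imPS (rv n x).
exists (unrv w); split; first exact: unrv_vec.
apply: (@rv_inj n); [exact: mv_vec | exact/iter_vec/unrv_vec |].
by rewrite rv_mat rv_iter rvK.
Qed.
End MatrixRank.

Section Semisimple.
Variables (n : nat) (LS : nat -> nat -> R).
Hypothesis hss : semisimple n LS.

Lemma ker_subspace : subspace n (ker_op n LS).
Proof.
split; [|split; [|split]].
- intros x [h _]; auto.
- split; [intros i _; reflexivity | apply mv_zero].
- intros x y [h1 h2] [h3 h4]; split.
  + intros i hi; unfold vadd; rewrite h1, h3; auto; ring.
  + rewrite mv_add, h2, h4; vext.
- intros a x [h1 h2]; split.
  + intros i hi; unfold vscale; rewrite h1; auto; ring.
  + rewrite mv_scale, h2; vext.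
Qed.

Lemma ker_invariant : invariant n LS (ker_op n LS).
Proof. intros x [_ h]; split; [apply mv_vec | rewrite h; apply mv_zero]. Qed.

Lemma ker_complement : exists V : (nat -> R) -> Prop, invariant n LS V /\
  (forall v, V v -> mat_vec n LS v = vzero -> v = vzero) /\
  (forall x, vec n x -> exists v, V v /\ mat_vec n LS x = mat_vec n LS v).
Proof.
destruct (hss _ ker_subspace ker_invariant) as [V [hV [hVi [hdisj hspan]]]].
exists V; split; [|split]; auto.
- intros v hv e; apply hdisj; auto; split; auto; apply hV; auto.
- intros x hx; destruct (hspan x hx) as [u [v [[_ hu] [hv ->]]]].
  exists v; split; auto; rewrite mv_add, hu; vext.
Qed.

Lemma semisimple_iter_ker m x :
  vec n x -> Nat.iter m (mat_vec n LS) x = vzero -> mat_vec n LS x = vzero.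
Proof.
intros hx hm; destruct ker_complement as [V [hVi [hinj hsplit]]].
destruct (hsplit x hx) as [v [hv hLx]].
assert (hVnil : forall m v, V v -> Nat.iter m (mat_vec n LS) v = vzero -> v = vzero).
{ clear - hVi hinj; induction m; intros v hv e; simpl in e; auto.
  change (Nat.iter (S m) (mat_vec n LS) v = vzero) in e.
  rewrite Nat.iter_succ_r in e; apply hinj; auto; apply IHm; auto. }
rewrite hLx; apply (hVnil m); [apply hVi; auto|].
rewrite <- hLx, <- Nat.iter_succ_r; simpl; rewrite hm; apply mv_zero.
Qed.

Lemma im_ker_zero y : im_op n LS y -> ker_op n LS y -> y = vzero.
Proof.
intros [x [hx ->]] [_ hk]; destruct ker_complement as [V [hVi [hinj hsplit]]].
destruct (hsplit x hx) as [v [hv hLx]].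
rewrite hLx in *; apply hinj; auto.
Qed.

Lemma im_vec y : im_op n LS y -> vec n y.
Proof. intros [x [_ ->]]; apply mv_vec. Qed.

Lemma decomp_unique a b a' b' :
  im_op n LS a -> ker_op n LS b -> im_op n LS a' -> ker_op n LS b' ->
  vadd a b = vadd a' b' -> a = a' /\ b = b'.
Proof.
intros ha [hb hb0] ha' [hb' hb0'] e.
assert (hdiff : vsub a a' = vzero).
{ apply im_ker_zero.
  - destruct ha as [x [hx ->]], ha' as [x' [hx' ->]].
    exists (vsub x x'); split; [|symmetry; apply mv_sub].
    intros i hi; unfold vsub; rewrite hx, hx'; auto; ring.
  - replace (vsub a a') with (vsub b' b).
    + split; [intros i hi; unfold vsub; rewrite hb, hb'; auto; ring|].
      rewrite mv_sub, hb0, hb0'; vext.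
    + apply functional_extensionality; intro i; apply (f_equal (fun f => f i)) in e.
      unfold vadd in e; unfold vsub; lra. }
split; apply functional_extensionality; intro i;
  apply (f_equal (fun f => f i)) in hdiff; apply (f_equal (fun f => f i)) in e;
  unfold vsub, vzero in hdiff; unfold vadd in e; lra.
Qed.

Variables (Pim Pker : (nat -> R) -> (nat -> R)).
Hypothesis hproj : forall x, vec n x ->
  im_op n LS (Pim x) /\ ker_op n LS (Pker x) /\ vadd (Pim x) (Pker x) = x.

Lemma Pim_zero : Pim vzero = vzero.
Proof.
assert (hz : vec n vzero) by (intros i _; reflexivity).
destruct (hproj vzero hz) as [hi [hk he]].
assert (h0i : im_op n LS vzero) by (exists vzero; split; auto; symmetry; apply mv_zero).
assert (h0k : ker_op n LS vzero) by (split; auto; apply mv_zero).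
apply (decomp_unique _ _ vzero vzero hi hk h0i h0k); rewrite he; vext.
Qed.

Lemma projections_commute B y : vec n y ->
  (forall x, ker_op n LS x -> ker_op n LS (mat_vec n B x)) ->
  (forall x, im_op n LS x -> im_op n LS (mat_vec n B x)) ->
  Pker (mat_vec n B y) = mat_vec n B (Pker y) /\ Pim (mat_vec n B y) = mat_vec n B (Pim y).
Proof.
intros hy hk hi; destruct (hproj y hy) as [h1 [h2 h3]].
destruct (hproj (mat_vec n B y) (mv_vec _ _ _)) as [h4 [h5 h6]].
destruct (decomp_unique (Pim (mat_vec n B y)) (Pker (mat_vec n B y))
  (mat_vec n B (Pim y)) (mat_vec n B (Pker y))); auto.
rewrite h6, <- mv_add, h3; auto.
Qed.
End Semisimple.

Section JordanChevalley.
Variables (n : nat) (L0 LS LN : nat -> nat -> R).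
Hypothesis hsum : forall i j, (i < n)%nat -> (j < n)%nat -> L0 i j = LS i j + LN i j.
Hypothesis hss : semisimple n LS.
Hypothesis hcom : commute n LS LN.

Lemma L0_split x : mat_vec n L0 x = vadd (mat_vec n LS x) (mat_vec n LN x).
Proof.
apply functional_extensionality; intro i; unfold mat_vec, vadd.
destruct (Nat.ltb_spec i n); [|ring].
rewrite <- rsum_plus; apply rsum_ext; intros; rewrite hsum; auto; ring.
Qed.

Lemma commute_L0_LN : commute n L0 LN.
Proof. intros x hx; rewrite !L0_split, mv_add, hcom; auto. Qed.

Lemma commute_L0_LS : commute n L0 LS.
Proof. intros x hx; rewrite !L0_split, mv_add, hcom; auto. Qed.

(* If L0^i x = 0 and LN^j x = 0 then LS^(i+j) x = 0: write LS x = L0 x - LN x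
   and induct on i + j, using that L0 and LN commute. *)
Lemma ker_iter_LS i j x : vec n x ->
  Nat.iter i (mat_vec n L0) x = vzero -> Nat.iter j (mat_vec n LN) x = vzero ->
  Nat.iter (i + j) (mat_vec n LS) x = vzero.
Proof.
remember (i + j)%nat as s; revert i j x Heqs.
induction s; intros i j x Hs hx h1 h2.
- destruct i; [|lia]; simpl in *; auto.
- destruct i as [|i]; [simpl in h1; subst x; apply iter_zero|].
  destruct j as [|j]; [simpl in h2; subst x; apply iter_zero|].
  assert (hLS : mat_vec n LS x = vsub (mat_vec n L0 x) (mat_vec n LN x))
    by (rewrite L0_split; vext).
  rewrite Nat.iter_succ_r, hLS, iter_sub.
  rewrite (IHs i (S j)), (IHs (S i) j); try lia; try apply mv_vec; try vext.
  + rewrite iter_comm, h1; [apply mv_zero | auto | apply commute_L0_LN].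
  + rewrite <- Nat.iter_succ_r; auto.
  + rewrite <- Nat.iter_succ_r; auto.
  + rewrite iter_comm, h2; [apply mv_zero | auto |].
    intros y hy; symmetry; apply commute_L0_LN; auto.
Qed.

Lemma ker_iter_L0 k x :
  ker_op n LS x -> Nat.iter k (mat_vec n L0) x = Nat.iter k (mat_vec n LN) x.
Proof.
intros hx; assert (hinv : forall m, ker_op n LS (Nat.iter m (mat_vec n LN) x)).
{ induction m as [|m [_ IH]]; simpl; auto; split; [apply mv_vec|].
  rewrite hcom by (apply iter_vec, hx); rewrite IH; apply mv_zero. }
induction k; simpl; auto.
rewrite IHk, L0_split; destruct (hinv k) as [_ ->]; vext.
Qed.

Variable k : nat.
Hypothesis hnil : forall x, vec n x -> Nat.iter k (mat_vec n LN) x = vzero.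

Lemma ker_LS_iff x :
  vec n x -> (mat_vec n LS x = vzero <-> Nat.iter k (mat_vec n L0) x = vzero).
Proof.
intros hx; split; intros h.
- rewrite ker_iter_L0; [apply hnil; auto | split; auto].
- apply (semisimple_iter_ker n LS hss (k + k)); auto; apply ker_iter_LS; auto.
Qed.

Variables (Pim Pker : (nat -> R) -> (nat -> R)).
Hypothesis hproj : forall x, vec n x ->
  im_op n LS (Pim x) /\ ker_op n LS (Pker x) /\ vadd (Pim x) (Pker x) = x.

(* im L0^k <= im LS, since L0^k kills the kernel part of x. *)
Lemma im_iter_L0 x :
  vec n x -> exists w, vec n w /\ Nat.iter k (mat_vec n L0) x = mat_vec n LS w.
Proof.
intros hx; destruct (hproj x hx) as [[w [hw e]] [hk ex]].
exists (Nat.iter k (mat_vec n L0) w); split; [apply iter_vec; auto|].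
rewrite <- ex, iter_add, e, (proj1 (ker_LS_iff _ (proj1 hk)) (proj2 hk)).
rewrite iter_comm; auto; [vext | apply commute_L0_LS].
Qed.

(* im LS <= im L0^k, by equality of ranks. *)
Lemma im_LS_iter y :
  vec n y -> exists w, vec n w /\ mat_vec n LS y = Nat.iter k (mat_vec n L0) w.
Proof. apply MatrixRank.image_incl_iter; [apply ker_LS_iff | apply im_iter_L0]. Qed.

Lemma ker_preserved B x :
  commute n L0 B -> ker_op n LS x -> ker_op n LS (mat_vec n B x).
Proof.
intros hB [hx hk]; split; [apply mv_vec|].
apply ker_LS_iff; [apply mv_vec|].
rewrite iter_comm, (proj1 (ker_LS_iff _ hx) hk); auto; apply mv_zero.
Qed.

Lemma im_preserved B y :
  commute n L0 B -> im_op n LS y -> im_op n LS (mat_vec n B y).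
Proof.
intros hB [x [hx ->]]; destruct (im_LS_iter x hx) as [w [hw ->]].
rewrite <- iter_comm by auto.
destruct (im_iter_L0 (mat_vec n B w) (mv_vec _ _ _)) as [w' [hw' e]].
exists w'; split; auto.
Qed.
End JordanChevalley.
Lemma vnorm_ge0 m x : 0 <= vnorm m x.
Proof. induction m; simpl; [lra | eapply Rle_trans; [apply IHm | apply Rmax_l]]. Qed.

Lemma coord_le m x i : (i < m)%nat -> Rabs (x i) <= vnorm m x.
Proof.
induction m; intros h; [lia|]; simpl.
destruct (Nat.eq_dec i m) as [->|]; [apply Rmax_r|].
eapply Rle_trans; [apply IHm; lia | apply Rmax_l].
Qed.

Lemma vnorm_le m x b :
  0 <= b -> (forall i, (i < m)%nat -> Rabs (x i) <= b) -> vnorm m x <= b.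
Proof. induction m; intros hb h; simpl; auto; apply Rmax_lub; auto. Qed.

Lemma vnorm_sub_diag m x : vnorm m (vsub x x) = 0.
Proof.
apply Rle_antisym; [|apply vnorm_ge0].
apply vnorm_le; [lra|]; intros; unfold vsub; rewrite Rminus_diag, Rabs_R0; lra.
Qed.

Lemma mat_vec_small n B b : 0 < b ->
  exists a, 0 < a <= b /\ forall x, vnorm n x < a -> vnorm n (mat_vec n B x) < b.
Proof.
intros hb.
set (T := rsum n (fun i => rsum n (fun k => Rabs (B i k)))).
assert (hrow : forall i, (i < n)%nat -> rsum n (fun k => Rabs (B i k)) <= T).
{ intros i hi; apply (rsum_term n (fun i => rsum n (fun k => Rabs (B i k)))); auto.
  intros; apply rsum_ge0; intros; apply Rabs_pos. }
assert (hT : 0 <= T) by (apply rsum_ge0; intros; apply rsum_ge0; intros; apply Rabs_pos).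
exists (b / (1 + T)); split; [split|].
- apply Rdiv_lt_0_compat; lra.
- apply (Rmult_le_reg_r (1 + T)); [lra|].
  unfold Rdiv; rewrite Rmult_assoc, Rinv_l, Rmult_1_r by lra; nra.
- intros x hx; assert (hx0 : 0 <= vnorm n x) by apply vnorm_ge0.
  apply Rle_lt_trans with ((1 + T) * vnorm n x).
  + apply vnorm_le; [nra|]; intros i hi; unfold mat_vec.
    destruct (Nat.ltb_spec i n) as [hin|]; [|lia].
    eapply Rle_trans; [apply (rsum_abs_bound n _ (fun k => Rabs (B i k) * vnorm n x))|].
    * intros j hj; rewrite Rabs_mult.
      apply Rmult_le_compat_l; [apply Rabs_pos | apply coord_le; auto].
    * rewrite (rsum_ext n _ (fun k => vnorm n x * Rabs (B i k))) by (intros; ring).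
      rewrite rsum_scal; specialize (hrow i hin); nra.
  + apply (Rmult_lt_compat_l (1 + T)) in hx; [|lra].
    unfold Rdiv in hx; rewrite <- Rmult_assoc, (Rmult_comm (1 + T) b), Rmult_assoc,
      Rinv_r, Rmult_1_r in hx by lra; exact hx.
Qed.

Lemma upd_upd x j s t : upd (upd x j s) j t = upd x j t.
Proof. apply functional_extensionality; intro i; unfold upd; destruct (Nat.eqb i j); auto. Qed.

Lemma upd_at x j t : upd x j t j = t.
Proof. unfold upd; rewrite Nat.eqb_refl; auto. Qed.

Lemma upd_same x j : upd x j (x j) = x.
Proof.
apply functional_extensionality; intro i; unfold upd.
destruct (Nat.eqb_spec i j) as [->|]; auto.
Qed.

Lemma upd_vec m x j t : (j < m)%nat -> vec m x -> vec m (upd x j t).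
Proof. intros hj hx i hi; unfold upd; destruct (Nat.eqb_spec i j); [lia|auto]. Qed.

Lemma rsum_upd m F x j t : (j < m)%nat ->
  rsum m (fun k => F k * upd x j t k) = rsum m (fun k => F k * x k) + F j * (t - x j).
Proof.
induction m; intros hj; [lia|]; simpl; unfold upd at 2.
destruct (Nat.eq_dec j m) as [->|].
- rewrite Nat.eqb_refl, (rsum_ext m _ (fun k => F k * x k)); [ring|].
  intros k hk; unfold upd; destruct (Nat.eqb_spec k m); [lia | auto].
- destruct (Nat.eqb_spec m j); [lia|]; rewrite IHm by lia; ring.
Qed.

Definition enc (n : nat) (X l : nat -> R) : nat -> R :=
  fun k => if Nat.ltb k n then X k else l (k - n)%nat.

Lemma vtake_enc n X l : vec n X -> vtake n (enc n X l) = X.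
Proof.
intros hX; apply functional_extensionality; intro k; unfold vtake, enc.
destruct (Nat.ltb_spec k n); auto; rewrite hX; auto.
Qed.

Lemma vdrop_enc n X l : vdrop n (enc n X l) = l.
Proof.
apply functional_extensionality; intro k; unfold vdrop, enc.
destruct (Nat.ltb_spec (n + k) n); [lia|]; f_equal; lia.
Qed.

Lemma enc_vec n p X l : vec n X -> vec p l -> vec (n + p) (enc n X l).
Proof. intros hX hl k hk; unfold enc; destruct (Nat.ltb_spec k n); [lia|]; apply hl; lia. Qed.

Lemma upd_enc n X l k t : (k < n)%nat -> upd (enc n X l) k t = enc n (upd X k t) l.
Proof.
intros hk; apply functional_extensionality; intro q; unfold upd, enc.
destruct (Nat.eqb_spec q k); destruct (Nat.ltb_spec q n); auto; lia.
Qed.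

Lemma enc_affine n X u l a :
  (fun k => enc n X l k + a * enc n u vzero k) = enc n (fun q => X q + a * u q) l.
Proof.
apply functional_extensionality; intro k; unfold enc, vzero.
destruct (Nat.ltb k n); ring.
Qed.
Lemma mvt_bound (h h' : R -> R) a b L e :
  (forall c, Rmin a b <= c <= Rmax a b -> derivable_pt_lim h c (h' c)) ->
  (forall c, Rmin a b <= c <= Rmax a b -> Rabs (h' c - L) <= e) ->
  Rabs (h b - h a - L * (b - a)) <= e * Rabs (b - a).
Proof.
intros hd hb.
destruct (MVT_abs (h - mult_real_fct L id)%F (fun c => h' c - L) a b) as [c [e1 e2]].
- intros c hc; apply derivable_pt_lim_minus; auto.
  replace L with (L * 1) at 2 by ring; apply derivable_pt_lim_scal, derivable_pt_lim_id.
- unfold minus_fct, mult_real_fct, id in e1.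
  replace (h b - h a - L * (b - a)) with (h b - L * b - (h a - L * a)) by ring.
  rewrite e1; apply Rmult_le_compat_r; [apply Rabs_pos | auto].
Qed.

Lemma between_dist a b t : Rmin a b <= t <= Rmax a b -> Rabs (t - a) <= Rabs (b - a).
Proof.
unfold Rmin, Rmax; destruct (Rle_dec a b); intros;
  unfold Rabs; destruct (Rcase_abs (t - a)); destruct (Rcase_abs (b - a)); lra.
Qed.

Lemma common_delta m (P : nat -> R -> Prop) :
  (forall j d d', P j d -> 0 < d' <= d -> P j d') ->
  (forall j, (j < m)%nat -> exists d, 0 < d /\ P j d) ->
  exists d, 0 < d /\ forall j, (j < m)%nat -> P j d.
Proof.
intros hmono; induction m; intros H.
- exists 1; split; [lra | intros; lia].
- destruct IHm as [d1 [h1 h1']]; [intros; apply H; lia|].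
  destruct (H m) as [d2 [h2 h2']]; [lia|].
  exists (Rmin d1 d2); split; [apply Rmin_pos; auto|].
  assert (0 < Rmin d1 d2) by (apply Rmin_pos; auto).
  intros j hj; destruct (Nat.eq_dec j m) as [->|].
  + apply (hmono _ d2); auto; split; [auto | apply Rmin_r].
  + apply (hmono _ d1); [apply h1'; lia | split; [auto | apply Rmin_l]].
Qed.

Lemma deriv_rsum m (F : nat -> R -> R) l x :
  (forall k, (k < m)%nat -> derivable_pt_lim (F k) x (l k)) ->
  derivable_pt_lim (fun t => rsum m (fun k => F k t)) x (rsum m l).
Proof.
induction m; intros H; simpl; [apply derivable_pt_lim_const|].
apply (derivable_pt_lim_plus (fun t => rsum m (fun k => F k t)) (F m)); auto.
Qed.

Definition coord_path (z0 u : nat -> R) (j : nat) : nat -> R :=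
  fun i => if Nat.ltb i j then z0 i + u i else z0 i.

Lemma coord_path_step z0 u j :
  coord_path z0 u (S j) = upd (coord_path z0 u j) j (z0 j + u j).
Proof.
apply functional_extensionality; intro i; unfold coord_path, upd.
destruct (Nat.eqb_spec i j) as [->|];
  [rewrite (proj2 (Nat.ltb_lt j (S j))) by lia; auto|].
destruct (Nat.ltb_spec i (S j)); destruct (Nat.ltb_spec i j); auto; lia.
Qed.

Lemma coord_path_end m z0 u : vec m u -> coord_path z0 u m = fun i => z0 i + u i.
Proof.
intros hu; apply functional_extensionality; intro i; unfold coord_path.
destruct (Nat.ltb_spec i m); auto; rewrite hu; auto; ring.
Qed.

Lemma coord_path_vec m z0 u j : vec m z0 -> vec m u -> vec m (coord_path z0 u j).
Proof. intros hz hu i hi; unfold coord_path; destruct (Nat.ltb i j); rewrite ?hz, ?hu; auto; ring. Qed.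

Lemma coord_path_dist m z0 u j t : vec m u -> Rabs (t - z0 j) <= Rabs (u j) ->
  vnorm m (vsub (upd (coord_path z0 u j) j t) z0) <= vnorm m u.
Proof.
intros hu ht; apply vnorm_le; [apply vnorm_ge0|]; intros i hi.
unfold vsub, upd, coord_path; destruct (Nat.eqb_spec i j) as [->|].
- eapply Rle_trans; [exact ht | apply coord_le; auto].
- destruct (Nat.ltb i j).
  + replace (z0 i + u i - z0 i) with (u i) by ring; apply coord_le; auto.
  + rewrite Rminus_diag, Rabs_R0; apply vnorm_ge0.
Qed.

Lemma quotient_estimate N S h Sv eps : 0 < eps -> 0 <= Sv -> h <> 0 ->
  Rabs (N - h * S) <= eps / (2 * (Sv + 1)) * (Rabs h * Sv) -> Rabs (N / h - S) < eps.
Proof.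
intros heps hSv hh hN; assert (hh1 : 0 < Rabs h) by (apply Rabs_pos_lt; auto).
replace (N / h - S) with ((N - h * S) / h) by (field; auto).
unfold Rdiv; rewrite Rabs_mult, Rabs_inv.
apply (Rmult_lt_reg_r (Rabs h)); auto; rewrite Rmult_assoc, Rinv_l, Rmult_1_r by lra.
eapply Rle_lt_trans; [exact hN|].
assert (hfrac : Sv / (2 * (Sv + 1)) < 1).
{ apply (Rmult_lt_reg_r (2 * (Sv + 1))); [lra|].
  unfold Rdiv; rewrite Rmult_assoc, Rinv_l by lra; lra. }
replace (eps / (2 * (Sv + 1)) * (Rabs h * Sv)) with (eps * Rabs h * (Sv / (2 * (Sv + 1))))
  by (field; lra).
assert (0 < eps * Rabs h) by nra; nra.
Qed.

Section PartialDerivatives.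
Variables (m : nat) (f : (nat -> R) -> R) (g : nat -> (nat -> R) -> R).
Hypothesis hpartial : forall j, (j < m)%nat -> forall x, vec m x ->
  derivable_pt_lim (fun t => f (upd x j t)) (x j) (g j x).

Lemma increment_estimate z0 u e d : vec m z0 -> vec m u ->
  (forall j, (j < m)%nat -> forall y, vec m y -> vnorm m (vsub y z0) < d ->
     Rabs (g j y - g j z0) < e) ->
  vnorm m u < d ->
  Rabs (f (fun i => z0 i + u i) - f z0 - rsum m (fun j => g j z0 * u j))
    <= e * rsum m (fun j => Rabs (u j)).
Proof.
intros hz hu hg hud.
assert (hstep : forall j, (j < m)%nat ->
  Rabs (f (coord_path z0 u (S j)) - f (coord_path z0 u j) - g j z0 * u j) <= e * Rabs (u j)).
{ intros j hj; rewrite coord_path_step; set (y := coord_path z0 u j).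
  assert (hy : vec m y) by (apply coord_path_vec; auto).
  assert (hyj : y j = z0 j) by (unfold y, coord_path; rewrite Nat.ltb_irrefl; auto).
  replace (f y) with (f (upd y j (z0 j))) by (rewrite <- hyj, upd_same; reflexivity).
  replace (g j z0 * u j) with (g j z0 * (z0 j + u j - z0 j)) by ring.
  replace (e * Rabs (u j)) with (e * Rabs (z0 j + u j - z0 j)) by (do 3 f_equal; ring).
  apply (mvt_bound (fun t => f (upd y j t)) (fun t => g j (upd y j t)) (z0 j) (z0 j + u j)).
  - intros t _; pose proof (hpartial j hj (upd y j t) (upd_vec m y j t hj hy)) as Ht.
    rewrite upd_at in Ht.
    replace (fun t0 => f (upd (upd y j t) j t0)) with (fun t0 => f (upd y j t0)) in Ht
      by (apply functional_extensionality; intro; rewrite upd_upd; auto).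
    exact Ht.
  - intros t ht; left; apply hg; [auto | apply upd_vec; auto|].
    eapply Rle_lt_trans; [apply coord_path_dist; auto | exact hud].
    replace (u j) with (z0 j + u j - z0 j) by ring; apply between_dist; auto. }
replace (f (fun i => z0 i + u i) - f z0 - rsum m (fun j => g j z0 * u j))
  with (rsum m (fun j => f (coord_path z0 u (S j)) - f (coord_path z0 u j) - g j z0 * u j)).
- rewrite <- rsum_scal; apply rsum_abs_bound; auto.
- rewrite rsum_minus, (rsum_tele m (fun j => f (coord_path z0 u j))), coord_path_end
    by auto; reflexivity.
Qed.

Lemma directional_derivative z0 v c : vec m z0 -> vec m v ->
  (forall j, (j < m)%nat -> cont_on m (g j)) ->
  derivable_pt_lim (fun t => f (fun i => z0 i + (t - c) * v i)) c
    (rsum m (fun j => g j z0 * v j)).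
Proof.
intros hz hv hc eps heps.
set (Sv := rsum m (fun j => Rabs (v j))).
assert (hS : 0 <= Sv) by (apply rsum_ge0; intros; apply Rabs_pos).
set (e := eps / (2 * (Sv + 1))).
assert (he : 0 < e) by (apply Rdiv_lt_0_compat; lra).
destruct (common_delta m (fun j d => forall y, vec m y -> vnorm m (vsub y z0) < d ->
  Rabs (g j y - g j z0) < e)) as [d [hd0 hd]].
{ intros j d0 d' H [h1 h2] y hy hn; apply H; auto; lra. }
{ intros j hj; destruct (hc j hj z0 hz e he) as [d [h1 h2]]; exists d; split; auto. }
set (V := vnorm m v); assert (hV : 0 <= V) by apply vnorm_ge0.
assert (hdV : 0 < d / (V + 1)) by (apply Rdiv_lt_0_compat; lra).
exists (mkposreal _ hdV); intros h hh0 hh; simpl in hh.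
assert (hh1 : 0 <= Rabs h) by apply Rabs_pos.
assert (hhV : Rabs h * V < d).
{ apply (Rmult_lt_compat_r (V + 1)) in hh; [|lra].
  unfold Rdiv in hh; rewrite Rmult_assoc, Rinv_l, Rmult_1_r in hh by lra; nra. }
assert (hu : vec m (vscale h v)) by (intros i hi; unfold vscale; rewrite hv; auto; ring).
assert (hud : vnorm m (vscale h v) < d).
{ eapply Rle_lt_trans; [|exact hhV]; apply vnorm_le; [nra|]; intros i hi.
  unfold vscale; rewrite Rabs_mult; apply Rmult_le_compat_l; [lra | apply coord_le; auto]. }
pose proof (increment_estimate z0 (vscale h v) e d hz hu hd hud) as H.
unfold vscale in H; rewrite (rsum_ext m _ (fun j => h * (g j z0 * v j))),
  (rsum_ext m (fun j => Rabs (h * v j)) (fun j => Rabs h * Rabs (v j))), !rsum_scal in H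
  by (intros; rewrite ?Rabs_mult; ring).
replace (fun i => z0 i + (c + h - c) * v i) with (fun i => z0 i + h * v i)
  by (apply functional_extensionality; intro; ring_simplify (c + h - c); auto).
replace (fun i => z0 i + (c - c) * v i) with z0 by (apply functional_extensionality; intro; ring).
apply (quotient_estimate _ _ _ Sv eps); auto.
Qed.
End PartialDerivatives.

Lemma smooth_partials m F : smooth m F -> exists g : nat -> (nat -> R) -> R,
  forall j, (j < m)%nat ->
    (forall x, vec m x -> derivable_pt_lim (fun t => F (upd x j t)) (x j) (g j x)) /\
    cont_on m (g j).
Proof.
intros hs; destruct (hs 1%nat) as [_ H].
destruct (functional_choice (fun j g => (j < m)%nat ->
  (forall x, vec m x -> derivable_pt_lim (fun t => F (upd x j t)) (x j) (g x)) /\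
  cont_on m g)) as [g hg].
- intros j; destruct (Nat.ltb_spec j m) as [hj|hj].
  + destruct (H j hj) as [g [h1 h2]]; exists g; intros _; split; auto.
  + exists (fun _ => 0); intros; lia.
- exists g; auto.
Qed.

Section Linearization.
Variables (n p : nat) (Gamma : (nat -> R) -> (nat -> R) -> (nat -> R)).
Variables (X0 lam0 : nat -> R) (L0 : nat -> nat -> R).
Hypothesis hsm :
  forall i, (i < n)%nat -> smooth (n + p) (fun z => Gamma (vtake n z) (vdrop n z) i).
Hypothesis hX0 : vec n X0.
Hypothesis hl0 : vec p lam0.
Hypothesis hL0 : forall i j, (i < n)%nat -> (j < n)%nat ->
  derivable_pt_lim (fun t => Gamma (upd X0 j t) lam0 i) (X0 j) (L0 i j).

Lemma directional_derivative_Gamma i u c : (i < n)%nat -> vec n u ->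
  derivable_pt_lim (fun t => Gamma (fun q => X0 q + (t - c) * u q) lam0 i) c
    (rsum n (fun k => L0 i k * u k)).
Proof.
intros hi hu.
set (F := fun z => Gamma (vtake n z) (vdrop n z) i).
set (z0 := enc n X0 lam0).
assert (hz0 : vec (n + p) z0) by (apply enc_vec; auto).
destruct (smooth_partials _ _ (hsm i hi)) as [g hg].
assert (hgL : forall k, (k < n)%nat -> g k z0 = L0 i k).
{ intros k hk; destruct (hg k ltac:(lia)) as [hdk _].
  pose proof (hdk z0 hz0) as H.
  replace (z0 k) with (X0 k) in H by (unfold z0, enc; rewrite (proj2 (Nat.ltb_lt k n)); auto).
  replace (fun t => Gamma (vtake n (upd z0 k t)) (vdrop n (upd z0 k t)) i)
    with (fun t => Gamma (upd X0 k t) lam0 i) in H.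
  - exact (uniqueness_limite _ _ _ _ H (hL0 i k hi hk)).
  - apply functional_extensionality; intro t; unfold z0.
    rewrite upd_enc, vtake_enc, vdrop_enc by (auto; apply upd_vec; auto); reflexivity. }
replace (fun t => Gamma (fun q => X0 q + (t - c) * u q) lam0 i)
  with (fun t => F (fun k => z0 k + (t - c) * enc n u vzero k)).
- replace (rsum n (fun k => L0 i k * u k))
    with (rsum (n + p) (fun k => g k z0 * enc n u vzero k)).
  + apply directional_derivative; auto; [intros; apply hg; auto | | intros; apply hg; auto].
    apply enc_vec; auto; intros q _; reflexivity.
  + rewrite (rsum_trunc (n + p) n); [|lia|].
    * apply rsum_ext; intros k hk; rewrite hgL by auto; unfold enc.
      rewrite (proj2 (Nat.ltb_lt k n)); auto.
    * intros k hk; unfold enc, vzero; destruct (Nat.ltb_spec k n); [lia | ring].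
- apply functional_extensionality; intro t; unfold F, z0; rewrite enc_affine.
  rewrite vtake_enc, vdrop_enc; auto.
  intros q hq; rewrite hX0, hu; auto; ring.
Qed.

Variable B : nat -> nat -> R.
Hypothesis heqv : forall X l, vec n X -> vec p l ->
  Gamma (mat_vec n B X) l = mat_vec n B (Gamma X l).
Hypothesis hfix : mat_vec n B X0 = X0.

(* Differentiating Gamma(B X; lam0) = B Gamma(X; lam0) in direction e_j at X0,
   once through each side, gives (B L0)_ij = (L0 B)_ij. *)
Lemma equivariance_entries i j : (i < n)%nat -> (j < n)%nat ->
  matmul n B L0 i j = matmul n L0 B i j.
Proof.
intros hi hj.
set (col := fun q => if Nat.ltb q n then B q j else 0).
assert (hline : forall t, mat_vec n B (upd X0 j t) = fun q => X0 q + (t - X0 j) * col q).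
{ intro t; apply functional_extensionality; intro q.
  assert (hq := f_equal (fun x => x q) hfix); cbv beta in hq.
  unfold mat_vec, col in *; destruct (Nat.ltb_spec q n).
  - rewrite rsum_upd, hq by auto; ring.
  - rewrite hX0 by auto; ring. }
apply (uniqueness_limite (fun t => Gamma (mat_vec n B (upd X0 j t)) lam0 i) (X0 j)).
- replace (fun t => Gamma (mat_vec n B (upd X0 j t)) lam0 i)
    with (fun t => rsum n (fun k => B i k * Gamma (upd X0 j t) lam0 k)).
  + apply deriv_rsum; intros k hk.
    apply (derivable_pt_lim_scal (fun t => Gamma (upd X0 j t) lam0 k)); auto.
  + apply functional_extensionality; intro t.
    rewrite heqv by (auto; apply upd_vec; auto); unfold mat_vec.
    rewrite (proj2 (Nat.ltb_lt i n)); auto.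
- replace (fun t => Gamma (mat_vec n B (upd X0 j t)) lam0 i)
    with (fun t => Gamma (fun q => X0 q + (t - X0 j) * col q) lam0 i)
    by (apply functional_extensionality; intro t; rewrite hline; auto).
  replace (matmul n L0 B i j) with (rsum n (fun k => L0 i k * col k)).
  + apply directional_derivative_Gamma; auto.
    intros q hq; unfold col; destruct (Nat.ltb_spec q n); [lia | auto].
  + apply rsum_ext; intros k hk; unfold col; rewrite (proj2 (Nat.ltb_lt k n)); auto.
Qed.

Lemma equivariance_commutes : commute n L0 B.
Proof.
intros x hx; rewrite !mv_mul; apply mv_ext; intros.
symmetry; apply equivariance_entries; auto.
Qed.
End Linearization.

Section Reduction.
Variables (n p : nat) (Gamma : (nat -> R) -> (nat -> R) -> (nat -> R)).
Variables (LS B : nat -> nat -> R) (Pim Pker : (nat -> R) -> (nat -> R)).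
Variables (X0 lam0 : nat -> R) (Xim : (nat -> R) -> (nat -> R) -> (nat -> R)) (d1 d2 : R).
Hypothesis hss : semisimple n LS.
Hypothesis hproj : forall x, vec n x ->
  im_op n LS (Pim x) /\ ker_op n LS (Pker x) /\ vadd (Pim x) (Pker x) = x.
Hypothesis hker : forall x, ker_op n LS x -> ker_op n LS (mat_vec n B x).
Hypothesis him : forall y, im_op n LS y -> im_op n LS (mat_vec n B y).
Hypothesis hGvec : forall X l, vec n X -> vec p l -> vec n (Gamma X l).
Hypothesis heqv : forall X l, vec n X -> vec p l ->
  Gamma (mat_vec n B X) l = mat_vec n B (Gamma X l).
Hypothesis hX0 : vec n X0.
Hypothesis hl0 : vec p lam0.
Hypothesis hG0 : Gamma X0 lam0 = vzero.
Hypothesis hfix : mat_vec n B X0 = X0.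
Hypothesis himpl : implicit_solution n p Gamma LS Pim Pker X0 lam0 Xim d1 d2.

Lemma Pker_comm y : vec n y -> Pker (mat_vec n B y) = mat_vec n B (Pker y).
Proof. intros hy; apply (projections_commute n LS hss Pim Pker hproj); auto. Qed.

Lemma Pim_comm y : vec n y -> Pim (mat_vec n B y) = mat_vec n B (Pim y).
Proof. intros hy; apply (projections_commute n LS hss Pim Pker hproj); auto. Qed.

(* Near the base point, B X_im(X_ker, lam) lies in im LS, is close to (X0)_im
   and solves the equation at B X_ker; by uniqueness it is X_im(B X_ker, lam). *)
Lemma implicit_solution_equivariant : exists eps, 0 < eps <= d1 /\
  forall Xk l, ker_op n LS Xk -> vec p l ->
    vnorm n (vsub Xk (Pker X0)) < eps -> vnorm p (vsub l lam0) < eps ->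
    Xim (mat_vec n B Xk) l = mat_vec n B (Xim Xk l).
Proof.
destruct himpl as [hd1 [hd2 [hsol hcont]]].
destruct (hproj X0 hX0) as [hPi [hPk hPs]].
assert (hBPk : mat_vec n B (Pker X0) = Pker X0) by (rewrite <- Pker_comm, hfix; auto).
assert (hBPi : mat_vec n B (Pim X0) = Pim X0) by (rewrite <- Pim_comm, hfix; auto).
assert (hbase : Xim (Pker X0) lam0 = Pim X0).
{ destruct (hsol (Pker X0) lam0 hPk hl0) as [_ [_ [_ huniq]]]; rewrite ?vnorm_sub_diag; auto.
  symmetry; apply huniq; rewrite ?vnorm_sub_diag, ?hPs, ?hG0; auto.
  apply (Pim_zero n LS hss Pim Pker hproj). }
destruct (mat_vec_small n B d1 hd1) as [a1 [[ha1 ha1d] hBa1]].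
destruct (mat_vec_small n B d2 hd2) as [a2 [[ha2 _] hBa2]].
destruct (hcont (Pker X0) lam0 hPk hl0) with (eps := a2) as [delta [hdel hdelta]];
  rewrite ?vnorm_sub_diag; auto.
assert (hmin : forall x, x < Rmin a1 delta -> x < a1 /\ x < d1 /\ x < delta)
  by (intros x hx; pose proof (Rmin_l a1 delta); pose proof (Rmin_r a1 delta); lra).
exists (Rmin a1 delta); split.
{ split; [apply Rmin_pos; auto | pose proof (Rmin_l a1 delta); lra]. }
intros Xk l hXk hl e1 e2.
destruct (hmin _ e1) as [e1a [e1d e1t]], (hmin _ e2) as [_ [e2d e2t]].
destruct (hsol Xk l hXk hl e1d e2d) as [hI [_ [hZ _]]].
assert (hsum : vec n (vadd (Xim Xk l) Xk))
  by (intros i hi; unfold vadd; rewrite (im_vec n LS _ hI), (proj1 hXk); auto; ring).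
assert (e1B : vnorm n (vsub (mat_vec n B Xk) (Pker X0)) < d1)
  by (rewrite <- hBPk, <- mv_sub; apply hBa1; auto).
destruct (hsol (mat_vec n B Xk) l (hker Xk hXk) hl e1B e2d) as [_ [_ [_ huniq]]].
symmetry; apply huniq.
- apply him; auto.
- rewrite <- hBPi, <- mv_sub; apply hBa2; rewrite <- hbase; apply hdelta; auto.
- rewrite <- mv_add, heqv, Pim_comm, hZ by auto; apply mv_zero.
Qed.

Lemma reduced_map_equivariant : exists eps, 0 < eps /\
  forall Xk l, ker_op n LS Xk -> vec p l ->
    vnorm n (vsub Xk (Pker X0)) < eps -> vnorm p (vsub l lam0) < eps ->
    reduced_map Gamma Pker Xim (mat_vec n B Xk) l
    = mat_vec n B (reduced_map Gamma Pker Xim Xk l).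
Proof.
destruct implicit_solution_equivariant as [eps [[heps hepsd] hXim]].
exists eps; split; auto; intros Xk l hXk hl e1 e2.
destruct himpl as [_ [_ [hsol _]]].
destruct (hsol Xk l hXk hl) as [hI _]; try lra.
assert (hsum : vec n (vadd (Xim Xk l) Xk))
  by (intros i hi; unfold vadd; rewrite (im_vec n LS _ hI), (proj1 hXk); auto; ring).
unfold reduced_map; rewrite hXim, <- mv_add, heqv, Pker_comm by auto; reflexivity.
Qed.
End Reduction.

Theorem mainTheorem11 (n p : nat) (Sigma : Type) (mul : Sigma -> Sigma -> Sigma)
    (A : Sigma -> nat -> nat -> R)
    (Gamma : (nat -> R) -> (nat -> R) -> (nat -> R))
    (X0 lam0 : nat -> R) (L0 LS LN : nat -> nat -> R)
    (Pim Pker : (nat -> R) -> (nat -> R))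
    (Xim : (nat -> R) -> (nat -> R) -> (nat -> R)) (d1 d2 : R) :
  (forall a b c, mul (mul a b) c = mul a (mul b c)) ->
  (forall s t x, vec n x ->
     mat_vec n (A s) (mat_vec n (A t) x) = mat_vec n (A (mul s t)) x) ->
  (forall X l, vec n X -> vec p l -> vec n (Gamma X l)) ->
  (forall i, (i < n)%nat -> smooth (n + p) (fun z => Gamma (vtake n z) (vdrop n z) i)) ->
  (forall s X l, vec n X -> vec p l ->
     Gamma (mat_vec n (A s) X) l = mat_vec n (A s) (Gamma X l)) ->
  vec n X0 -> vec p lam0 -> Gamma X0 lam0 = vzero ->
  (forall s, mat_vec n (A s) X0 = X0) ->
  (forall i j, (i < n)%nat -> (j < n)%nat ->
     derivable_pt_lim (fun t => Gamma (upd X0 j t) lam0 i) (X0 j) (L0 i j)) ->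
  (forall i j, (i < n)%nat -> (j < n)%nat -> L0 i j = LS i j + LN i j) ->
  semisimple n LS -> nilpotent n LN -> commute n LS LN ->
  (forall x, vec n x ->
     im_op n LS (Pim x) /\ ker_op n LS (Pker x) /\ vadd (Pim x) (Pker x) = x) ->
  implicit_solution n p Gamma LS Pim Pker X0 lam0 Xim d1 d2 ->
  (forall s x, ker_op n LS x -> ker_op n LS (mat_vec n (A s) x)) /\
  (forall s x, im_op n LS x -> im_op n LS (mat_vec n (A s) x)) /\
  (forall s, exists eps, 0 < eps /\
     forall Xk l, ker_op n LS Xk -> vec p l ->
       vnorm n (vsub Xk (Pker X0)) < eps -> vnorm p (vsub l lam0) < eps ->
       reduced_map Gamma Pker Xim (mat_vec n (A s) Xk) l
       = mat_vec n (A s) (reduced_map Gamma Pker Xim Xk l)).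
Proof.
intros _ _ hGvec hsm heqv hX0 hl0 hG0 hfix hL0 hsum hss [k hnil] hcom hproj himpl.
assert (hcomm : forall s, commute n L0 (A s))
  by (intro s; apply (equivariance_commutes n p Gamma X0 lam0 L0); auto).
assert (hker : forall s x, ker_op n LS x -> ker_op n LS (mat_vec n (A s) x))
  by (intros s x; apply (ker_preserved n L0 LS LN hsum hss hcom k hnil); auto).
assert (him : forall s y, im_op n LS y -> im_op n LS (mat_vec n (A s) y))
  by (intros s y; apply (im_preserved n L0 LS LN hsum hss hcom k hnil Pim Pker hproj); auto).
split; [exact hker | split; [exact him |]].
intros s; apply (reduced_map_equivariant n p Gamma LS (A s) Pim Pker X0 lam0 Xim d1 d2); auto.
Qed.
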